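(* Let $\alpha$ be a set and $\odot:\alpha\times\alpha\to\alpha$. Define on $\mathrm{Maybe}\,\alpha=\{\mathrm{Nothing}\}\cup\{\mathrm{Just}\,x : x\in\alpha\}$ the functions $\mathit{seq}':\mathrm{Maybe}\,\alpha\times\alpha\to\mathrm{Maybe}\,\alpha$ by $\mathit{seq}'(\mathrm{Nothing},y)=\mathrm{Just}\,y$, $\mathit{seq}'(\mathrm{Just}\,x,y)=\mathrm{Just}(x\odot y)$, and $\odot':\mathrm{Maybe}\,\alpha\times\mathrm{Maybe}\,\alpha\to\mathrm{Maybe}\,\alpha$ by $\mathrm{Nothing}\odot' y=y$, $x\odot'\mathrm{Nothing}=x$, $\mathrm{Just}\,x\odot'\mathrm{Just}\,y=\mathrm{Just}(x\odot y)$. Then calls $\mathrm{reduce}(\odot,\mathit{rdd})$ have deterministic outcomes if and only if calls $\mathrm{aggregate}(\mathrm{Nothing},\mathit{seq}',\odot',\mathit{rdd})$ have deterministic outcomes.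
   Context: Lists are finite; $\mathbin{+\!\!+}$ is concatenation. $\mathrm{foldl}(f,b,[\,])=b$, $\mathrm{foldl}(f,b,[x_1,\dots,x_n])=f(\cdots f(f(b,x_1),x_2)\cdots,x_n)$; for a nonempty list, $\mathrm{reducel}(f,[x_1,x_2,\dots,x_n])=\mathrm{foldl}(f,x_1,[x_2,\dots,x_n])$. An RDD is a list of lists. A partitioning is a function $P$ sending each list $L$ to an RDD obtained by splitting $L$ into consecutive pieces $p_1,\dots,p_n$ with $p_1\mathbin{+\!\!+}\cdots\mathbin{+\!\!+}p_n=L$ and then arbitrarily permuting $[p_1,\dots,p_n]$. $\mathrm{aggregate}_{\mathrm{det}}(z,\mathit{seq},\mathit{comb},[q_1,\dots,q_m])=\mathrm{foldl}(\mathit{comb},z,[\mathrm{foldl}(\mathit{seq},z,q_1),\dots,\mathrm{foldl}(\mathit{seq},z,q_m)])$; calls $\mathrm{aggregate}(z,\mathit{seq},\mathit{comb},\mathit{rdd})$ have deterministic outcomes if $\mathrm{aggregate}_{\mathrm{det}}(z,\mathit{seq},\mathit{comb},P(L))=\mathrm{foldl}(\mathit{seq},z,L)$ for all lists $L$ and partitionings $P$ (pieces possibly empty). $\mathrm{reduce}_{\mathrm{det}}(\odot,[q_1,\dots,q_m])=\mathrm{reducel}(\odot,[\mathrm{reducel}(\odot,q_1),\dots,\mathrm{reducel}(\odot,q_m)])$; calls $\mathrm{reduce}(\odot,\mathit{rdd})$ have deterministic outcomes if $\mathrm{reduce}_{\mathrm{det}}(\odot,P(L))=\mathrm{reducel}(\odot,L)$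 for all nonempty lists $L$ over $\alpha$ and all partitionings $P$ all of whose pieces are nonempty. *)

From Stdlib Require Import List Permutation.
Import ListNotations.
Set Implicit Arguments.

Definition foldl {A B : Type} (f : B -> A -> B) (b : B) (l : list A) : B :=
  fold_left f l b.

(* reducel on a nonempty list; None on the empty list (where it is undefined) *)
Definition reducel {A : Type} (f : A -> A -> A) (l : list A) : option A :=
  match l with
  | [] => None
  | x :: xs => Some (foldl f x xs)
  end.

Fixpoint all_some {A : Type} (l : list (option A)) : option (list A) :=
  match l with
  | [] => Some []
  | None :: _ => None
  | Some x :: r => match all_some r with Some r' => Some (x :: r') | None => None end
  end.

Definition RDD (A : Type) := list (list A).

Definition partitioning {A : Type} (P : list A -> RDD A) : Prop :=
  forall L : list A, exists pieces : list (list A),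
    concat pieces = L /\ Permutation pieces (P L).

Definition aggregate_det {A B : Type} (z : B) (sq : B -> A -> B) (comb : B -> B -> B)
  (rdd : RDD A) : B :=
  foldl comb z (map (foldl sq z) rdd).

Definition reduce_det {A : Type} (op : A -> A -> A) (rdd : RDD A) : option A :=
  match all_some (map (reducel op) rdd) with
  | Some l => reducel op l
  | None => None
  end.

Definition aggregate_deterministic {A B : Type} (z : B) (sq : B -> A -> B)
  (comb : B -> B -> B) : Prop :=
  forall (P : list A -> RDD A) (L : list A), partitioning P ->
    aggregate_det z sq comb (P L) = foldl sq z L.

Definition reduce_deterministic {A : Type} (op : A -> A -> A) : Prop :=
  forall (P : list A -> RDD A) (L : list A), partitioning P ->
    (forall L' : list A, Forall (fun q => q <> []) (P L')) ->
    L <> [] ->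
    reduce_det op (P L) = reducel op L.

Definition seq' {A : Type} (op : A -> A -> A) (m : option A) (y : A) : option A :=
  match m with
  | None => Some y
  | Some x => Some (op x y)
  end.

Definition op' {A : Type} (op : A -> A -> A) (m n : option A) : option A :=
  match m, n with
  | None, y => y
  | x, None => x
  | Some x, Some y => Some (op x y)
  end.

From Stdlib Require Import List Permutation.
Import ListNotations.

(* With [None] as zero, [seq' op] folds a piece to [None] if it is empty and to
   [Some] of its left reduction otherwise, and [op' op] folds the partial results
   to the left reduction of the [Some] entries.  Hence the aggregate of an RDD is
   the reduce of the same RDD with its empty pieces discarded.  Discarding empty
   pieces turns any partitioning into one with nonempty pieces, which gives one
   direction; the other is immediate since then nothing is discarded.  The empty
   list is handled apart: all its pieces are empty and the aggregate is [None]. *)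

Fixpoint cat_somes {A : Type} (l : list (option A)) : list A :=
  match l with
  | [] => []
  | None :: r => cat_somes r
  | Some x :: r => x :: cat_somes r
  end.

Definition nonempty {A : Type} (q : list A) : bool :=
  match q with [] => false | _ => true end.

Lemma nonempty_spec {A : Type} (q : list A) : nonempty q = true <-> q <> [].
Proof. destruct q; simpl; split; congruence. Qed.

Lemma Permutation_filter {B : Type} (f : B -> bool) (l l' : list B) :
  Permutation l l' -> Permutation (filter f l) (filter f l').
Proof.
  induction 1; simpl.
  - constructor.
  - destruct (f x); auto.
  - destruct (f x), (f y); auto using Permutation_refl; constructor.
  - eapply Permutation_trans; eassumption.
Qed.

Lemma concat_filter_nonempty {A : Type} (ls : list (list A)) :
  concat (filter nonempty ls) = concat ls.
Proof. induction ls as [|[|x q] ls IH]; simpl; congruence. Qed.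

Lemma Forall_filter_nonempty {A : Type} (ls : list (list A)) :
  Forall (fun q => q <> []) (filter nonempty ls).
Proof.
  apply Forall_forall; intros q Hq.
  apply nonempty_spec, (proj2 (proj1 (filter_In _ _ _) Hq)).
Qed.

Lemma partitioning_filter_nonempty {A : Type} (P : list A -> RDD A) :
  partitioning P -> partitioning (fun L => filter nonempty (P L)).
Proof.
  intros HP L; destruct (HP L) as [pieces [Hcat Hperm]].
  exists (filter nonempty pieces); split.
  - now rewrite concat_filter_nonempty.
  - now apply Permutation_filter.
Qed.

Lemma partitioning_nil {A : Type} (P : list A -> RDD A) :
  partitioning P -> Forall (fun q => q = []) (P []).
Proof.
  intro HP; destruct (HP []) as [pieces [Hcat Hperm]].
  now apply (Permutation_Forall Hperm), concat_nil_Forall.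
Qed.

Section ReducedPieces.
Variables (A : Type) (op : A -> A -> A).

Lemma foldl_seq'_Some (x : A) (L : list A) :
  foldl (seq' op) (Some x) L = Some (foldl op x L).
Proof. revert x; induction L as [|y L IH]; intro x; [reflexivity|apply IH]. Qed.

Lemma foldl_seq'_None (L : list A) : foldl (seq' op) None L = reducel op L.
Proof. destruct L as [|x L]; [reflexivity|apply foldl_seq'_Some]. Qed.

Lemma foldl_op'_Some (x : A) (ms : list (option A)) :
  foldl (op' op) (Some x) ms = Some (foldl op x (cat_somes ms)).
Proof. revert x; induction ms as [|[y|] ms IH]; intro x; [reflexivity|apply IH|apply IH]. Qed.

Lemma foldl_op'_None (ms : list (option A)) :
  foldl (op' op) None ms = reducel op (cat_somes ms).
Proof. induction ms as [|[y|] ms IH]; [reflexivity|apply foldl_op'_Some|apply IH]. Qed.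

Definition reduced_pieces (rdd : RDD A) : list A := cat_somes (map (reducel op) rdd).

Lemma aggregate_det_seq'_op' (rdd : RDD A) :
  aggregate_det None (seq' op) (op' op) rdd = reducel op (reduced_pieces rdd).
Proof.
  unfold aggregate_det, reduced_pieces.
  now rewrite (map_ext _ _ foldl_seq'_None), foldl_op'_None.
Qed.

Lemma all_some_reduced_pieces (rdd : RDD A) :
  Forall (fun q => q <> []) rdd ->
  all_some (map (reducel op) rdd) = Some (reduced_pieces rdd).
Proof.
  unfold reduced_pieces; induction 1 as [|[|x q] rdd Hq _ IH]; simpl.
  - reflexivity.
  - contradiction.
  - now rewrite IH.
Qed.

Lemma reduce_det_nonempty (rdd : RDD A) :
  Forall (fun q => q <> []) rdd -> reduce_det op rdd = reducel op (reduced_pieces rdd).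
Proof. intro Hne; unfold reduce_det; now rewrite all_some_reduced_pieces. Qed.

Lemma reduced_pieces_filter_nonempty (rdd : RDD A) :
  reduced_pieces (filter nonempty rdd) = reduced_pieces rdd.
Proof. unfold reduced_pieces; induction rdd as [|[|x q] rdd IH]; simpl; congruence. Qed.

Lemma reduced_pieces_nil (rdd : RDD A) :
  Forall (fun q => q = []) rdd -> reduced_pieces rdd = [].
Proof. unfold reduced_pieces; induction 1 as [|q rdd Hq _ IH]; [reflexivity|now subst q]. Qed.

End ReducedPieces.

Theorem lemma3 (A : Type) (op : A -> A -> A) :
  reduce_deterministic op <->
  aggregate_deterministic (@None A) (seq' op) (op' op).
Proof.
  split.
  - intros Hred P L HP.
    rewrite aggregate_det_seq'_op', foldl_seq'_None.
    destruct L as [|x L].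
    + now rewrite reduced_pieces_nil by now apply partitioning_nil.
    + rewrite <- reduced_pieces_filter_nonempty, <- reduce_det_nonempty
        by apply Forall_filter_nonempty.
      apply (Hred (fun L => filter nonempty (P L))).
      * now apply partitioning_filter_nonempty.
      * intro; apply Forall_filter_nonempty.
      * discriminate.
  - intros Hagg P L HP Hne _.
    rewrite reduce_det_nonempty, <- aggregate_det_seq'_op', <- foldl_seq'_None by apply Hne.
    now apply Hagg.
Qed.
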